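(* Let $n\ge2$, let $\mathcal A$ be a maximal commutative subalgebra of $\mathcal M_d(\mathbb C)$, and let $\mathcal B$ be a maximal subalgebra of $\mathcal T_{n,d}[\mathcal A]$. Then: (i) $\mathcal D_{n,d}[\mathcal A]\subset\mathcal B$; (ii) if $A\in\mathcal B$, then $\mathbf E_k(A)\in\mathcal B$ for all $0\le k\le n-1$; (iii) $\mathcal B$ coincides with the linear span of $\mathbf E_0(\mathcal B),\dots,\mathbf E_{n-1}(\mathcal B)$; (iv) $\mathcal B$ is invariant under the action of $\mathfrak S_{n-1}$, i.e. $\sigma(A)\in\mathcal B$ for all $A\in\mathcal B$, $\sigma\in\mathfrak S_{n-1}$; (v) $\mathbf E_k(\mathcal B)\neq\{0\}$ for every $k=0,\dots,n-1$.
   Context: A block Toeplitz matrix is an $n\times n$ block matrix $A=(A_{i-j})_{i,j=0}^{n-1}$ with $A_m\in\mathcal M_d(\mathbb C)$. For $\mathcal A\subset\mathcal M_d(\mathbb C)$, $\mathcal T_{n,d}[\mathcal A]$ is the set of block Toeplitz matrices with all $A_m\in\mathcal A$, and $\mathcal D_{n,d}[\mathcal A]$ the set of those with additionally $A_m=0$ for $m\ne0$. A maximal subalgebra of $\mathcal T_{n,d}[\mathcal A]$ is a subalgebra of the matrix algebra (a linear subspace closed under multiplication) contained in $\mathcal T_{n,d}[\mathcal A]$ and maximal under inclusion among such. For $k=0,\dots,n-1$, $\mathbf E_k$ maps an $n\times n$ block matrix $T$ to the block matrix whose $(i,j)$ entry is $T_{i,j}$ if $i-j\in\{k,k-n\}$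 and $0$ otherwise. The group $\mathfrak S_{n-1}$ of permutations of $\{1,\dots,n-1\}$ acts on block Toeplitz matrices by $B=\sigma(A)$ with $B_0=A_0$, $B_k=A_{\sigma^{-1}(k)}$, $B_{k-n}=A_{\sigma^{-1}(k)-n}$ for $1\le k\le n-1$. *)

From HB Require Import structures.
From mathcomp Require Import all_boot all_order all_algebra all_fingroup.
Set Implicit Arguments. Unset Strict Implicit. Unset Printing Implicit Defensive.
Import Order.TTheory GRing.Theory Num.Theory.
Local Open Scope ring_scope.

(* The field of scalars: any numeric algebraically closed field C
   (e.g. the complex numbers).  d x d matrices over C: 'M[C]_d.
   An n x n block matrix with d x d blocks is a matrix 'M['M[C]_d]_n;
   its product (mulmx over the ring 'M[C]_d) is the usual block product,
   i.e. the product in M_{nd}(C). *)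

Section Defs.
Variable C : numClosedFieldType.

Definition is_subalg_d d (S : 'M[C]_d -> Prop) : Prop :=
  [/\ S 0,
      (forall X Y, S X -> S Y -> S (X + Y)),
      (forall (c : C) X, S X -> S (c *: X)) &
      (forall X Y, S X -> S Y -> S (X * Y))].

Definition is_commutative_d d (S : 'M[C]_d -> Prop) : Prop :=
  forall X Y, S X -> S Y -> X * Y = Y * X.

Definition is_max_comm_subalg d (S : 'M[C]_d -> Prop) : Prop :=
  [/\ is_subalg_d S, is_commutative_d S &
      forall S' : 'M[C]_d -> Prop, is_subalg_d S' -> is_commutative_d S' ->
        (forall X, S X -> S' X) -> forall X, S' X -> S X].

Definition bscale d n (c : C) (T : 'M['M[C]_d]_n) : 'M['M[C]_d]_n :=
  map_mx (fun X => c *: X) T.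

Definition is_subalg_b d n (S : 'M['M[C]_d]_n -> Prop) : Prop :=
  [/\ S 0,
      (forall X Y, S X -> S Y -> S (X + Y)),
      (forall (c : C) X, S X -> S (bscale c X)) &
      (forall X Y, S X -> S Y -> S (X *m Y))].

Definition toeplitz_mx d n (f : int -> 'M[C]_d) : 'M['M[C]_d]_n :=
  \matrix_(i < n, j < n) f ((i : nat)%:Z - (j : nat)%:Z).

Definition Tnd d n (A : 'M[C]_d -> Prop) (T : 'M['M[C]_d]_n) : Prop :=
  exists f : int -> 'M[C]_d,
    (forall m : int, - (n%:Z) < m < n%:Z -> A (f m)) /\ T = toeplitz_mx n f.

Definition Dnd d n (A : 'M[C]_d -> Prop) (T : 'M['M[C]_d]_n) : Prop :=
  exists f : int -> 'M[C]_d,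
    (forall m : int, - (n%:Z) < m < n%:Z -> A (f m)) /\
    (forall m : int, - (n%:Z) < m < n%:Z -> m != 0 -> f m = 0) /\
    T = toeplitz_mx n f.

Definition is_max_subalg_in d n (A : 'M[C]_d -> Prop)
    (B : 'M['M[C]_d]_n -> Prop) : Prop :=
  [/\ is_subalg_b B, (forall X, B X -> Tnd A X) &
      forall B' : 'M['M[C]_d]_n -> Prop, is_subalg_b B' ->
        (forall X, B X -> B' X) -> (forall X, B' X -> Tnd A X) ->
        forall X, B' X -> B X].

Definition Ek d n (k : nat) (T : 'M['M[C]_d]_n) : 'M['M[C]_d]_n :=
  \matrix_(i < n, j < n)
    if ((i : nat)%:Z - (j : nat)%:Z == k%:Z)
       || ((i : nat)%:Z - (j : nat)%:Z == k%:Z - n%:Z)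
    then T i j else 0.

Definition bspan d n (S : 'M['M[C]_d]_n -> Prop) (X : 'M['M[C]_d]_n) : Prop :=
  exists (m : nat) (c : 'I_m -> C) (v : 'I_m -> 'M['M[C]_d]_n),
    (forall i, S (v i)) /\ X = \sum_(i < m) bscale (c i) (v i).

(* A permutation sigma of {1,..,n-1} is encoded as s : {perm 'I_n}
   fixing 0.  sigma(A) has B_0 = A_0, B_k = A_{sigma^-1 k},
   B_{k-n} = A_{sigma^-1(k) - n} for 1 <= k <= n-1. *)
Definition sigma_sym d n (s : {perm 'I_n}) (f : int -> 'M[C]_d) (m : int)
    : 'M[C]_d :=
  if m == 0 then f 0 else
  let k : nat := if 0 < m then absz m else absz (m + n%:Z) in
  if @insub nat (fun k => k < n)%N _ k is Some o then
    let k' : nat := val ((s^-1)%g o) in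
    if 0 < m then f k'%:Z else f (k'%:Z - n%:Z)
  else f m.

End Defs.

Arguments toeplitz_mx {C d} n f.
Arguments Ek {C d n} k T.
Arguments sigma_sym {C d n} s f m.
Arguments is_max_subalg_in {C d} n A B.
Arguments Tnd {C d n} A T.
Arguments Dnd {C d n} A T.
Arguments bspan {C d n} S X.
Arguments is_max_comm_subalg {C d} S.

(* A block Toeplitz matrix T(f) of size n is determined by its symbol
   f(m), -n < m < n.  For symbols with values in a commutative algebra A,
   the product T(f) T(g) is again Toeplitz iff f and g are "compatible":
        f(k) g(l - n) = f(k - n) g(l)        for all 0 < k, l < n.
   Compatibility is bilinear, symmetric, and stable under products, so the
   compatible Toeplitz matrices form a "double commutant" subalgebra.  This
   yields the maximality criterion [maximal_absorbs]: a Toeplitz matrix W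
   with entries in A that is compatible with itself and with every element
   of a maximal subalgebra B already lies in B.  A special case is
   [pattern_in_max]: W is in B as soon as each of its off-diagonal pairs
   (W_k, W_{k-n}) is zero or a copy of a pair of some X in B.  Parts
   (i), (ii) and (iv) of the theorem are instances of this pattern
   criterion, (iii) follows from (ii) since every matrix is the sum of its
   diagonals E_k, and (v) uses the pattern criterion for a nonzero block
   and the absorption criterion otherwise (with 1 in A, as A is maximal). *)

From HB Require Import structures.
From mathcomp Require Import all_boot all_order all_algebra all_fingroup.
From mathcomp Require Import zify.
From Stdlib Require Import Classical.
Import Order.TTheory GRing.Theory Num.Theory.
Set Implicit Arguments. Unset Strict Implicit. Unset Printing Implicit Defensive.
Local Open Scope ring_scope.

Section BlockToeplitz.
Variables (C : numClosedFieldType) (d : nat).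
Local Notation mat := 'M[C]_d.

Definition entry n (X : 'M[mat]_n) (i j : nat) : mat :=
  if (insub i : option 'I_n) is Some i' then
    if (insub j : option 'I_n) is Some j' then X i' j' else 0 else 0.

Definition symbol n (X : 'M[mat]_n) (m : int) : mat :=
  if 0 <= m then entry X (absz m) 0 else entry X 0 (absz m).

Definition in_range (n : nat) (m : int) := - (n%:Z) < m < n%:Z.

Lemma entry_toeplitz n (f : int -> mat) (i j : nat) :
  (i < n)%N -> (j < n)%N -> entry (toeplitz_mx n f) i j = f (i%:Z - j%:Z).
Proof.
move=> hi hj; rewrite /entry.
case: insubP => [i' _ vi|]; last by rewrite hi.
case: insubP => [j' _ vj|]; last by rewrite hj.
by rewrite mxE vi vj.
Qed.

Lemma symbol_toeplitz n (f : int -> mat) (m : int) :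
  in_range n m -> symbol (toeplitz_mx n f) m = f m.
Proof.
case/andP=> h1 h2; rewrite /symbol.
by case: ifP => h0; rewrite entry_toeplitz; first [congr f; lia | lia].
Qed.

Lemma Tnd_symbol n (A : mat -> Prop) (X : 'M[mat]_n) :
  Tnd A X -> X = toeplitz_mx n (symbol X) /\
    (forall m, in_range n m -> A (symbol X m)).
Proof.
case=> f [hf ->]; split; last by move=> m hm; rewrite symbol_toeplitz //; apply: hf.
apply/matrixP=> i j; rewrite !mxE symbol_toeplitz //.
by rewrite /in_range; have := ltn_ord i; have := ltn_ord j; lia.
Qed.

Lemma entryD n (X Y : 'M[mat]_n) i j :
  entry (X + Y) i j = entry X i j + entry Y i j.
Proof.
rewrite /entry; case: insub => [i'|]; last by rewrite addr0.
by case: insub => [j'|]; [rewrite mxE | rewrite addr0].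
Qed.

Lemma entryZ n c (X : 'M[mat]_n) i j : entry (bscale c X) i j = c *: entry X i j.
Proof.
rewrite /entry; case: insub => [i'|]; last by rewrite scaler0.
by case: insub => [j'|]; [rewrite mxE | rewrite scaler0].
Qed.

Lemma entry0 n i j : entry (0 : 'M[mat]_n) i j = 0.
Proof. by rewrite /entry; case: insub => [i'|] //; case: insub => [j'|] //; rewrite mxE. Qed.

Lemma symbolD n (X Y : 'M[mat]_n) m : symbol (X + Y) m = symbol X m + symbol Y m.
Proof. by rewrite /symbol; case: ifP => _; rewrite entryD. Qed.

Lemma symbolZ n c (X : 'M[mat]_n) m : symbol (bscale c X) m = c *: symbol X m.
Proof. by rewrite /symbol; case: ifP => _; rewrite entryZ. Qed.

Lemma symbol0 n m : symbol (0 : 'M[mat]_n) m = 0.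
Proof. by rewrite /symbol; case: ifP => _; rewrite entry0. Qed.

Lemma in_range_cases (n : nat) (m : int) : in_range n m ->
  m = 0 \/ (exists2 k : nat, (0 < k < n)%N & m = k%:Z) \/
  (exists2 k : nat, (0 < k < n)%N & m = k%:Z - n%:Z).
Proof.
case: m => [[|k]|k] hm; first by left.
  by right; left; exists k.+1 => //; rewrite /in_range in hm; lia.
by right; right; exists (n - k.+1)%N; rewrite /in_range in hm; lia.
Qed.

(* Scalars commute with block multiplication (M_d(C) is not an algebra
   structure for every d, so this is taken from the matrix library). *)
Lemma scale_mull (c : C) (a b : mat) : (c *: a) * b = c *: (a * b).
Proof. by rewrite -[_ * _]/(_ *m _) scalemxAl. Qed.

Lemma scale_mulr (c : C) (a b : mat) : a * (c *: b) = c *: (a * b).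
Proof. by rewrite -[_ * _]/(_ *m _) scalemxAr. Qed.

Definition conv (f g : int -> mat) n (i j : nat) : mat :=
  \sum_(q < n) f (i%:Z - q%:Z) * g (q%:Z - j%:Z).

Lemma mul_toeplitzE n (f g : int -> mat) (i j : 'I_n) :
  (toeplitz_mx n f *m toeplitz_mx n g) i j = conv f g n i j.
Proof. by rewrite mxE; apply: eq_bigr => q _; rewrite !mxE. Qed.

Lemma entry_mul_toeplitz n (f g : int -> mat) (i j : nat) :
  (i < n)%N -> (j < n)%N ->
  entry (toeplitz_mx n f *m toeplitz_mx n g) i j = conv f g n i j.
Proof.
move=> hi hj; rewrite /entry.
case: insubP => [i' _ vi|]; last by rewrite hi.
case: insubP => [j' _ vj|]; last by rewrite hj.
by rewrite mul_toeplitzE vi vj.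
Qed.

(* Moving one step down a diagonal of T(f) T(g) trades the first term of
   the sum for the last one. *)
Lemma conv_shift (f g : int -> mat) n i j : (0 < n)%N ->
  conv f g n i.+1 j.+1 + f (i%:Z - (n.-1)%:Z) * g ((n.-1)%:Z - j%:Z) =
  conv f g n i j + f (i.+1%:Z) * g (- (j.+1)%:Z).
Proof.
case: n => // n _ /=; rewrite /conv big_ord_recl big_ord_recr /=.
have -> : f (i.+1%:Z - (0%N)%:Z) * g ((0%N)%:Z - j.+1%:Z) =
          f (i.+1%:Z) * g (- (j.+1)%:Z) by congr (f _ * g _); lia.
have -> : \sum_(q < n) f (i.+1%:Z - (bump 0 q)%:Z) * g ((bump 0 q)%:Z - j.+1%:Z)
        = \sum_(q < n) f (i%:Z - q%:Z) * g (q%:Z - j%:Z).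
  by apply: eq_bigr => q _; rewrite /bump /=; congr (f _ * g _); lia.
by rewrite -addrA addrC.
Qed.

Lemma conv_in (A : mat -> Prop) (f g : int -> mat) n i j :
  is_subalg_d A -> (forall m, in_range n m -> A (f m)) ->
  (forall m, in_range n m -> A (g m)) ->
  (i < n)%N -> (j < n)%N -> A (conv f g n i j).
Proof.
case=> A0 AD _ AM hf hg hi hj; apply: (big_ind A) => // q _.
by apply: AM; [apply: hf | apply: hg]; rewrite /in_range; have := ltn_ord q; lia.
Qed.

(* Compatibility of two symbols, in the form used to move along diagonals. *)
Definition shift_compat n (f g : int -> mat) :=
  forall i j : nat, (i.+1 < n)%N -> (j.+1 < n)%N ->
    f (i.+1%:Z) * g (- (j.+1)%:Z) = f (i%:Z - (n.-1)%:Z) * g ((n.-1)%:Z - j%:Z).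

Lemma conv_diag n (f g : int -> mat) : shift_compat n f g ->
  forall a b c, (a + c < n)%N -> (b + c < n)%N -> conv f g n (a + c) (b + c) = conv f g n a b.
Proof.
move=> h a b; elim=> [|c IH] ha hb; first by rewrite !addn0.
rewrite !addnS in ha hb *.
have e := conv_shift f g (a + c) (b + c) (leq_ltn_trans (leq0n _) ha).
rewrite (h _ _ ha hb) in e.
by rewrite -IH; [move/addIr: e | lia | lia].
Qed.

Lemma toeplitz_mul_Tnd (A : mat -> Prop) n (f g : int -> mat) :
  is_subalg_d A -> (forall m, in_range n m -> A (f m)) ->
  (forall m, in_range n m -> A (g m)) ->
  shift_compat n f g -> Tnd A (toeplitz_mx n f *m toeplitz_mx n g).
Proof.
move=> sA hf hg h.
exists (fun m => if 0 <= m then conv f g n (absz m) 0 else conv f g n 0 (absz m)).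
split=> [m hm|].
  by case: ifP => h0; apply: conv_in => //; rewrite /in_range in hm; lia.
apply/matrixP=> i j; rewrite mul_toeplitzE mxE.
have hi := ltn_ord i; have hj := ltn_ord j.
case: (leqP j i) => hji.
  have -> : (0 <= i%:Z - j%:Z) = true by lia.
  have -> : absz (i%:Z - j%:Z) = (i - j)%N by lia.
  by have := conv_diag h (a := (i - j)%N) (b := 0) (c := j); rewrite subnK // add0n => ->.
have -> : (0 <= i%:Z - j%:Z) = false by lia.
have -> : absz (i%:Z - j%:Z) = (j - i)%N by lia.
have e := conv_diag h (a := 0) (b := (j - i)%N) (c := i).
by rewrite add0n subnK in e; [rewrite e | exact: ltnW].
Qed.

Lemma Tnd_mul_shift_compat (A : mat -> Prop) n (f g : int -> mat) :
  Tnd A (toeplitz_mx n f *m toeplitz_mx n g) -> shift_compat n f g.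
Proof.
case=> h [_ eh] i j hi hj.
have e := conv_shift f g i j (leq_ltn_trans (leq0n _) hi).
have e1 := congr1 (fun M : 'M[mat]_n => M (Ordinal hi) (Ordinal hj)) eh.
have e2 := congr1 (fun M : 'M[mat]_n => M (Ordinal (ltnW hi)) (Ordinal (ltnW hj))) eh.
rewrite /= !mul_toeplitzE /= !mxE in e1 e2.
have e3 : conv f g n i.+1 j.+1 = conv f g n i j by rewrite e1 e2 /=; congr h; lia.
by rewrite e3 in e; symmetry; exact: (addrI _ e).
Qed.

Definition compat n (X Y : 'M[mat]_n) :=
  forall k l : nat, (0 < k < n)%N -> (0 < l < n)%N ->
    symbol X k%:Z * symbol Y (l%:Z - n%:Z) = symbol X (k%:Z - n%:Z) * symbol Y l%:Z.

Lemma compatP n (X Y : 'M[mat]_n) : compat X Y <-> shift_compat n (symbol X) (symbol Y).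
Proof.
split=> h.
  move=> i j hi hj; have := h i.+1 (n.-1 - j)%N hi ltac:(lia).
  have -> : (n.-1 - j)%N%:Z - n%:Z = - (j.+1)%:Z by lia.
  have -> : i.+1%:Z - n%:Z = i%:Z - (n.-1)%:Z by lia.
  by have -> : (n.-1 - j)%N%:Z = (n.-1)%:Z - j%:Z by lia.
move=> k l /andP[k0 kn] /andP[l0 ln].
have := h k.-1 (n.-1 - l)%N ltac:(lia) ltac:(lia).
have -> : k.-1.+1 = k by lia.
have -> : - (n.-1 - l)%N.+1%:Z = l%:Z - n%:Z by lia.
have -> : k.-1%:Z - (n.-1)%:Z = k%:Z - n%:Z by lia.
by have -> : (n.-1)%:Z - (n.-1 - l)%N%:Z = l%:Z by lia.
Qed.

Lemma compat_addl n (X Y Z : 'M[mat]_n) : compat X Z -> compat Y Z -> compat (X + Y) Z.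
Proof. by move=> h1 h2 k l hk hl; rewrite !symbolD !mulrDl h1 ?h2. Qed.

Lemma compat_scalel n c (X Z : 'M[mat]_n) : compat X Z -> compat (bscale c X) Z.
Proof. by move=> h k l hk hl; rewrite !symbolZ !scale_mull h. Qed.

Lemma compat_0l n (Z : 'M[mat]_n) : compat 0 Z.
Proof. by move=> k l hk hl; rewrite !symbol0 !mul0r. Qed.

Section CommutativeEntries.
Variables (A : mat -> Prop) (n : nat).
Hypotheses (subA : is_subalg_d A) (commA : is_commutative_d A).

Lemma Tnd0 : Tnd A (0 : 'M[mat]_n).
Proof.
case: subA => A0 _ _ _; exists (fun _ => 0); split => //.
by apply/matrixP=> i j; rewrite !mxE.
Qed.

Lemma TndD (X Y : 'M[mat]_n) : Tnd A X -> Tnd A Y -> Tnd A (X + Y).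
Proof.
case: subA => _ AD _ _ [f [hf ->]] [g [hg ->]]; exists (fun m => f m + g m); split.
  by move=> m hm; apply: AD; [apply: hf | apply: hg].
by apply/matrixP=> i j; rewrite !mxE.
Qed.

Lemma TndZ c (X : 'M[mat]_n) : Tnd A X -> Tnd A (bscale c X).
Proof.
case: subA => _ _ AS _ [f [hf ->]]; exists (fun m => c *: f m); split.
  by move=> m hm; apply: AS; apply: hf.
by apply/matrixP=> i j; rewrite !mxE.
Qed.

Lemma Tnd_mul (X Y : 'M[mat]_n) : Tnd A X -> Tnd A Y -> compat X Y -> Tnd A (X *m Y).
Proof.
move=> hX hY /compatP h.
have [eX aX] := Tnd_symbol hX; have [eY aY] := Tnd_symbol hY.
by rewrite {1}eX {1}eY; apply: toeplitz_mul_Tnd.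
Qed.

Lemma Tnd_mul_compat (X Y : 'M[mat]_n) :
  Tnd A X -> Tnd A Y -> Tnd A (X *m Y) -> compat X Y.
Proof.
move=> hX hY hXY; apply/compatP.
have [eX _] := Tnd_symbol hX; have [eY _] := Tnd_symbol hY.
by rewrite {1}eX {1}eY in hXY; apply: Tnd_mul_shift_compat hXY.
Qed.

Lemma compat_sym (X Y : 'M[mat]_n) : Tnd A X -> Tnd A Y -> compat X Y -> compat Y X.
Proof.
move=> hX hY h k l hk hl.
have [_ aX] := Tnd_symbol hX; have [_ aY] := Tnd_symbol hY.
have r m : (0 < m < n)%N -> in_range n m /\ in_range n (m%:Z - n%:Z).
  by move=> hm; rewrite /in_range; split; lia.
have [k1 k2] := r k hk; have [l1 l2] := r l hl.
by rewrite (commA (aY _ k1) (aX _ l2)) -h // (commA (aX _ l1) (aY _ k2)).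
Qed.

Lemma symbol_mul_pos (f g : int -> mat) (k : nat) : (k < n)%N ->
  symbol (toeplitz_mx n f *m toeplitz_mx n g) k%:Z = conv f g n k 0.
Proof. by move=> hk; rewrite /symbol /= entry_mul_toeplitz //; lia. Qed.

Lemma symbol_mul_neg (f g : int -> mat) (k : nat) : (0 < k < n)%N ->
  symbol (toeplitz_mx n f *m toeplitz_mx n g) (k%:Z - n%:Z) = conv f g n 0 (n - k).
Proof.
move=> hk; rewrite /symbol.
have -> : (0 <= k%:Z - n%:Z) = false by lia.
have -> : absz (k%:Z - n%:Z) = (n - k)%N by lia.
by rewrite entry_mul_toeplitz //; lia.
Qed.

(* Termwise comparison behind [compat_mul]: the first term of one sum
   matches the last term of the other, the remaining terms match by the
   compatibility of g with z. *)
Lemma conv_compat (f g z : int -> mat) i j : (0 < n)%N ->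
  (forall q : nat, (q.+1 < n)%N ->
     g (q.+1%:Z) * z (- (j.+1)%:Z) = g (q%:Z - (n.-1)%:Z) * z ((n.-1)%:Z - j%:Z)) ->
  f (i.+1%:Z) * g 0 * z (- (j.+1)%:Z) = f (i%:Z - (n.-1)%:Z) * g 0 * z ((n.-1)%:Z - j%:Z) ->
  conv f g n i.+1 0 * z (- (j.+1)%:Z) = conv f g n i n.-1 * z ((n.-1)%:Z - j%:Z).
Proof.
case: n => // n' _ hq h0 /=; rewrite /conv big_ord_recl big_ord_recr /= !mulrDl.
have -> : f (i.+1%:Z - (0%N)%:Z) * g ((0%N)%:Z - (0%N)%:Z) = f (i.+1%:Z) * g 0.
  by congr (f _ * g _); lia.
have -> : f (i%:Z - n'%:Z) * g (n'%:Z - n'%:Z) = f (i%:Z - n'%:Z) * g 0.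
  by congr (f _ * g _); lia.
rewrite h0 addrC; congr (_ + _).
rewrite !mulr_suml; apply: eq_bigr => q _.
rewrite -!mulrA; congr (_ * _); first by rewrite /bump /=; congr f; lia.
have := hq q (ltn_ord q); rewrite /bump /=.
by have -> : (1 + q)%N%:Z - (0%N)%:Z = q.+1%:Z by lia.
Qed.

(* Compatibility is stable under products (entries of A commute). *)
Lemma compat_mul (X Y Z : 'M[mat]_n) : Tnd A X -> Tnd A Y -> Tnd A Z ->
  compat X Y -> compat X Z -> compat Y Z -> compat (X *m Y) Z.
Proof.
move=> hX hY hZ /compatP cXY /compatP cXZ /compatP cYZ.
have [eX aX] := Tnd_symbol hX; have [eY aY] := Tnd_symbol hY.
have [_ aZ] := Tnd_symbol hZ.
apply/compatP; rewrite {1}eX {1}eY => i j hi hj.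
rewrite symbol_mul_pos //.
have -> : i%:Z - (n.-1)%:Z = (i.+1)%:Z - n%:Z by lia.
rewrite symbol_mul_neg ?hi //.
have eD := conv_diag cXY (a := 0%N) (b := (n - i.+1)%N) (c := i).
rewrite add0n (_ : (n - i.+1 + i)%N = n.-1) in eD; last by lia.
rewrite -eD; [|lia|lia].
apply: conv_compat; [lia | by move=> q hq; apply: cYZ |].
have ag : A (symbol Y 0) by apply: aY; rewrite /in_range; lia.
rewrite -!mulrA (commA ag (aZ _ _)); last by rewrite /in_range; lia.
rewrite (commA ag (aZ _ _)); last by rewrite /in_range; lia.
by rewrite !mulrA cXZ.
Qed.

End CommutativeEntries.

Lemma scale1_mull (c : C) (y : mat) : (c *: (1 : mat)) * y = c *: y.
Proof. by rewrite scale_mull mul1r. Qed.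

Lemma scale1_mulr (c : C) (y : mat) : y * (c *: (1 : mat)) = c *: y.
Proof. by rewrite scale_mulr mulr1. Qed.

(* A maximal commutative subalgebra contains the identity: A + C 1 is
   still a commutative subalgebra. *)
Lemma max_comm_subalg1 (A : mat -> Prop) : is_max_comm_subalg A -> A 1.
Proof.
case=> [[A0 AD AS AM] cA mA].
pose S (X : mat) := exists a (c : C), A a /\ X = a + c *: (1 : mat).
apply: (mA S).
- split.
  + by exists 0, 0; rewrite scale0r addr0.
  + move=> _ _ [a [c [ha ->]]] [b [e [hb ->]]]; exists (a + b), (c + e).
    by split; [exact: AD | rewrite scalerDl addrACA].
  + move=> k _ [a [c [ha ->]]]; exists (k *: a), (k * c).
    by split; [exact: AS | rewrite scalerDr scalerA].
  + move=> _ _ [a [c [ha ->]]] [b [e [hb ->]]].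
    exists (a * b + c *: b + e *: a), (c * e); split.
      exact: (AD _ _ (AD _ _ (AM _ _ ha hb) (AS _ _ hb)) (AS _ _ ha)).
    rewrite mulrDl !mulrDr scale1_mull scale1_mulr scale1_mull scalerA.
    by rewrite -!addrA; congr (_ + _); rewrite addrC -!addrA; congr (_ + _); rewrite addrC.
- move=> _ _ [a [c [ha ->]]] [b [e [hb ->]]].
  rewrite !mulrDl !mulrDr !scale1_mull !scale1_mulr !scalerA (cA a b) // (mulrC c e).
  by rewrite -!addrA; congr (_ + _); rewrite !addrA; congr (_ + _); rewrite addrC.
- by move=> X hX; exists X, 0; rewrite scale0r addr0.
- by exists 0, 1; rewrite scale1r add0r.
Qed.

Lemma one_neq0 : (0 < d)%N -> (1 : mat) != 0.
Proof.
move=> d0; apply/eqP => /(congr1 (fun M : mat => M (Ordinal d0) (Ordinal d0))).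
by rewrite !mxE eqxx /= => /eqP; rewrite oner_eq0.
Qed.

Section FixedSize.
Variable n : nat.

Lemma Ek_toeplitz (X : 'M[mat]_n) k : X = toeplitz_mx n (symbol X) ->
  Ek k X = toeplitz_mx n
    (fun m => if (m == k%:Z) || (m == k%:Z - n%:Z) then symbol X m else 0).
Proof. by move=> eX; apply/matrixP => i j; rewrite !mxE; case: ifP => // _; rewrite {1}eX mxE. Qed.

Lemma bscale1 (X : 'M[mat]_n) : bscale 1 X = X.
Proof. by apply/matrixP => i j; rewrite mxE scale1r. Qed.

Lemma sum_Ek (X : 'M[mat]_n) : X = \sum_(k < n) Ek k X.
Proof.
apply/matrixP => r c; rewrite summxE.
have hr := ltn_ord r; have hc := ltn_ord c.
pose k0 := if (c <= r)%N then (r - c)%N else (r + n - c)%N.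
have hk0 : (k0 < n)%N by rewrite /k0; case: ifP; lia.
rewrite (bigD1 (Ordinal hk0)) //= mxE.
have -> : (r%:Z - c%:Z == k0%:Z) || (r%:Z - c%:Z == k0%:Z - n%:Z) by rewrite /k0; case: ifP; lia.
rewrite big1 ?addr0 // => q hq; rewrite mxE.
have hqn : (nat_of_ord q != k0)%N.
  by apply: contra hq => /eqP e; apply/eqP; apply: val_inj.
case: ifP => // hcond; exfalso.
by move: hcond hqn (ltn_ord q); rewrite /k0; case: (leqP c r) => hcr; lia.
Qed.

Lemma sigma_sym0 (s : {perm 'I_n}) (f : int -> mat) : sigma_sym s f 0 = f 0.
Proof. by rewrite /sigma_sym eqxx. Qed.

Lemma sigma_sym_pair (s : {perm 'I_n}) (f : int -> mat) (k : nat) :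
  (forall i : 'I_n, val i = 0%N -> val (s i) = 0%N) -> (0 < k < n)%N ->
  exists2 k' : nat, (0 < k' < n)%N &
    sigma_sym s f k%:Z = f k'%:Z /\ sigma_sym s f (k%:Z - n%:Z) = f (k'%:Z - n%:Z).
Proof.
move=> hs /andP[k0 kn]; pose o := Ordinal kn.
exists (val ((s^-1)%g o)).
  rewrite ltn_ord andbT lt0n; apply/eqP => h.
  by have := hs _ h; rewrite permKV /=; lia.
rewrite /sigma_sym.
have -> : (k%:Z == 0) = false by lia.
have -> : (k%:Z - n%:Z == 0) = false by lia.
have -> : (0 < k%:Z) = true by lia.
have -> : (0 < k%:Z - n%:Z) = false by lia.
have -> : absz (k%:Z - n%:Z + n%:Z) = k by lia.
case: insubP => [u _ vu|]; last by rewrite kn.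
by have -> : u = o by apply: val_inj; rewrite vu.
Qed.

Definition single_sym (k : nat) (a b : mat) (m : int) : mat :=
  if m == k%:Z then a else if m == k%:Z - n%:Z then b else 0.

Lemma Ek_single k (a b : mat) :
  Ek k (toeplitz_mx n (single_sym k a b)) = toeplitz_mx n (single_sym k a b).
Proof.
apply/matrixP=> i j; rewrite !mxE; case: ifP => // /norP[/negbTE h1 /negbTE h2].
by rewrite /single_sym h1 h2.
Qed.

Lemma single_neq0 k (a b : mat) : (k < n)%N ->
  (a != 0) || ((0 < k)%N && (b != 0)) -> toeplitz_mx n (single_sym k a b) != 0.
Proof.
move=> hk /orP[ha|/andP[k0 hb]]; apply/eqP => h.
  have := congr1 (fun M : 'M[mat]_n => M (Ordinal hk) (Ordinal (leq_ltn_trans (leq0n k) hk))) h.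
  rewrite !mxE /single_sym /=.
  have -> : (k%:Z - 0%:Z == k%:Z) = true by lia.
  by move=> e; rewrite e eqxx in ha.
have h2 : (n - k < n)%N by lia.
have := congr1 (fun M : 'M[mat]_n => M (Ordinal (leq_ltn_trans (leq0n k) hk)) (Ordinal h2)) h.
rewrite !mxE /single_sym /=.
have -> : (0%:Z - (n - k)%N%:Z == k%:Z) = false by lia.
have -> : (0%:Z - (n - k)%N%:Z == k%:Z - n%:Z) = true by lia.
by move=> e; rewrite e eqxx in hb.
Qed.

Lemma Tnd_single (A : mat -> Prop) k (a b : mat) :
  A 0 -> A a -> A b -> Tnd A (toeplitz_mx n (single_sym k a b)).
Proof.
move=> A0 ha hb; exists (single_sym k a b); split => // m _.
by rewrite /single_sym; case: ifP => _ //; case: ifP.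
Qed.

Lemma symbol_single k (a b : mat) (k' : nat) : (0 < k < n)%N -> (0 < k' < n)%N ->
  symbol (toeplitz_mx n (single_sym k a b)) k'%:Z = (if k' == k then a else 0) /\
  symbol (toeplitz_mx n (single_sym k a b)) (k'%:Z - n%:Z) = (if k' == k then b else 0).
Proof.
move=> hk hk'; rewrite !symbol_toeplitz /in_range; try lia.
rewrite /single_sym; case: (eqVneq k' k) => [->|ne].
  rewrite eqxx; split => //.
  have -> : (k%:Z - n%:Z == k%:Z) = false by lia.
  by rewrite eqxx.
have -> : (k'%:Z == k%:Z) = false by lia.
have -> : (k'%:Z == k%:Z - n%:Z) = false by lia.
have -> : (k'%:Z - n%:Z == k%:Z) = false by lia.
by have -> : (k'%:Z - n%:Z == k%:Z - n%:Z) = false by lia.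
Qed.

Section MaximalSubalgebra.
Variables (A : mat -> Prop) (B : 'M[mat]_n -> Prop).
Hypotheses (subA : is_subalg_d A) (commA : is_commutative_d A).
Hypothesis maxB : is_max_subalg_in n A B.

(* Elements of B are pairwise compatible, as B is closed under products. *)
Lemma compat_in_max (Y Z : 'M[mat]_n) : B Y -> B Z -> compat Y Z.
Proof.
case: maxB => [[_ _ _ BM] BT _] hY hZ.
by apply: Tnd_mul_compat; apply: BT => //; apply: BM.
Qed.

(* Double commutant argument: adjoining W to B, the matrices of T_{n,d}[A]
   compatible with everything compatible with B and W form a subalgebra of
   T_{n,d}[A] containing B and W; by maximality it is B. *)
Lemma maximal_absorbs (W : 'M[mat]_n) :
  Tnd A W -> compat W W -> (forall Y, B Y -> compat W Y) -> B W.
Proof.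
move=> hW cWW cWB; have [_ BT Bmax] := maxB.
pose S s := B s \/ s = W.
have ST s : S s -> Tnd A s by case=> [/BT|->].
have cS s t : S s -> S t -> compat s t.
  case=> [hs|->] [ht|->] //; [exact: compat_in_max | | exact: cWB].
  by apply: (compat_sym commA) => //; [exact: BT | exact: cWB].
pose S' Z := Tnd A Z /\ forall s, S s -> compat s Z.
pose B' X := Tnd A X /\ forall Z, S' Z -> compat X Z.
have SB' s : S s -> B' s by move=> hs; split; [apply: ST | move=> Z hZ; exact: hZ.2 s hs].
have cB' X Y : B' X -> B' Y -> compat X Y.
  move=> [hX cX] [hY cY]; apply: cX; split => // s hs.
  apply: (compat_sym commA) => //; first by apply: ST.
  by apply: cY; split; [apply: ST | move=> t ht; apply: cS].
apply: (Bmax B' _ _ _ W (SB' _ (or_intror erefl))).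
- split.
  + by split; [exact: Tnd0 subA | move=> Z _; apply: compat_0l].
  + move=> X Y [hX cX] [hY cY]; split; first exact: (TndD subA hX hY).
    by move=> Z hZ; apply: compat_addl; [apply: cX | apply: cY].
  + move=> c X [hX cX]; split; first exact: (TndZ subA c hX).
    by move=> Z hZ; apply: compat_scalel; apply: cX.
  + move=> X Y hX' hY'; have cXY := cB' _ _ hX' hY'.
    case: hX' => hX cX; case: hY' => hY cY; split; first exact: (Tnd_mul subA hX hY cXY).
    by move=> Z hZ; apply: (compat_mul commA) => //; [case: hZ | apply: cX | apply: cY].
- by move=> X hX; apply: SB'; left.
- by move=> X [].
Qed.

Definition pattern_of (X W : 'M[mat]_n) :=
  forall k : nat, (0 < k < n)%N ->
    (symbol W k%:Z = 0 /\ symbol W (k%:Z - n%:Z) = 0) \/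
    exists2 k' : nat, (0 < k' < n)%N &
      symbol W k%:Z = symbol X k'%:Z /\ symbol W (k%:Z - n%:Z) = symbol X (k'%:Z - n%:Z).

Lemma pattern_in_max (X W : 'M[mat]_n) : B X -> Tnd A W -> pattern_of X W -> B W.
Proof.
move=> hX hW cp; apply: maximal_absorbs => // [k l hk hl | Y hY k l hk hl];
  case: (cp k hk) => [[-> ->]|[k' hk' [-> ->]]]; rewrite ?mul0r //;
  last exact: compat_in_max.
case: (cp l hl) => [[-> ->]|[l' hl' [-> ->]]]; rewrite ?mulr0 //.
exact: compat_in_max.
Qed.

Lemma diag_in_max (X : 'M[mat]_n) : Dnd A X -> B X.
Proof.
move=> [f [hfA [hf0 eX]]]; have [[B0 _ _ _] _ _] := maxB.
apply: (pattern_in_max B0); first by exists f.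
move=> k hk; left; rewrite eX !symbol_toeplitz /in_range; try lia.
by rewrite !hf0 //; lia.
Qed.

Lemma Ek_in_max (X : 'M[mat]_n) k : B X -> (k < n)%N -> B (Ek k X).
Proof.
move=> hX hk; have [_ BT _] := maxB.
have [eX aX] := Tnd_symbol (BT _ hX); have [A0 _ _ _] := subA.
apply: (pattern_in_max hX).
  rewrite (Ek_toeplitz k eX); eexists; split; last reflexivity.
  by move=> m hm /=; case: ifP => _ //; apply: aX.
move=> k' hk'; rewrite (Ek_toeplitz k eX) !symbol_toeplitz /in_range; try lia.
case: (eqVneq k' k) => [ek|ne].
  subst k'; right; exists k => //; split; first by rewrite eqxx.
  have -> : (k%:Z - n%:Z == k%:Z) = false by lia.
  by rewrite eqxx.
left; have -> : (k'%:Z == k%:Z) = false by lia.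
have -> : (k'%:Z == k%:Z - n%:Z) = false by lia.
have -> : (k'%:Z - n%:Z == k%:Z) = false by lia.
by have -> : (k'%:Z - n%:Z == k%:Z - n%:Z) = false by lia.
Qed.

Lemma max_span_Ek (X : 'M[mat]_n) :
  B X <-> bspan (fun Y => exists2 k : nat, (k < n)%N & exists2 Z, B Z & Y = Ek k Z) X.
Proof.
have [[B0 BD BS _] _ _] := maxB; split.
  move=> hX; exists n, (fun _ => 1), (fun k => Ek k X); split.
    by move=> k; exists k => //; exists X.
  by rewrite {1}(sum_Ek X); apply: eq_bigr => k _; rewrite bscale1.
case=> m [c [v [hv ->]]]; apply: (big_ind B) => // i _; apply: BS.
by have [k hk [Z hZ ->]] := hv i; exact: Ek_in_max.
Qed.

Lemma perm_in_max (s : {perm 'I_n}) (X : 'M[mat]_n) (f : int -> mat) :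
  (forall i : 'I_n, val i = 0%N -> val (s i) = 0%N) ->
  B X -> X = toeplitz_mx n f -> B (toeplitz_mx n (sigma_sym s f)).
Proof.
move=> hs hX eX; have [_ BT _] := maxB.
have [_ aX] := Tnd_symbol (BT _ hX).
have sX m : in_range n m -> symbol X m = f m by move=> hm; rewrite eX symbol_toeplitz.
have hfA m : in_range n m -> A (f m) by move=> hm; rewrite -sX //; apply: aX.
apply: (pattern_in_max hX).
  exists (sigma_sym s f); split => // m hm.
  case: (in_range_cases hm) => [->|[[k hk ->]|[k hk ->]]].
  - by rewrite sigma_sym0; apply: hfA; rewrite /in_range; lia.
  - by have [k' hk' [-> _]] := sigma_sym_pair f hs hk; apply: hfA; rewrite /in_range; lia.
  - by have [k' hk' [_ ->]] := sigma_sym_pair f hs hk; apply: hfA; rewrite /in_range; lia.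
move=> k hk; right; have [k' hk' [e1 e2]] := sigma_sym_pair f hs hk.
by exists k' => //; rewrite !symbol_toeplitz ?e1 ?e2 ?sX // /in_range; lia.
Qed.

(* A nonzero off-diagonal pair of some Y in B can be moved to any
   position k, giving an element of B with E_k nonzero. *)
Lemma offdiag_spread (Y : 'M[mat]_n) (l k : nat) : B Y -> (0 < l < n)%N ->
  (symbol Y l%:Z != 0) || (symbol Y (l%:Z - n%:Z) != 0) ->
  (0 < k < n)%N -> exists2 X, B X & Ek k X != 0.
Proof.
move=> hY hl hnz hk; have [_ BT _] := maxB; have [_ aY] := Tnd_symbol (BT _ hY).
have [A0 _ _ _] := subA.
exists (toeplitz_mx n (single_sym k (symbol Y l%:Z) (symbol Y (l%:Z - n%:Z)))); last first.
  by case/andP: hk => k0 kn; rewrite Ek_single single_neq0 // k0.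
apply: (pattern_in_max hY); first by apply: Tnd_single => //; apply: aY; rewrite /in_range; lia.
move=> k' hk'; have [-> ->] := symbol_single (symbol Y l%:Z) (symbol Y (l%:Z - n%:Z)) hk hk'.
by case: eqP => _; [right; exists l | left].
Qed.

(* If all off-diagonal pairs of B vanish, the block 1 at position k is
   compatible with B and with itself, hence absorbed into B. *)
Lemma offdiag_adjoin (k : nat) : A 1 -> (0 < k < n)%N ->
  (forall Y, B Y -> forall l : nat, (0 < l < n)%N ->
     symbol Y l%:Z = 0 /\ symbol Y (l%:Z - n%:Z) = 0) ->
  B (toeplitz_mx n (single_sym k 1 0)).
Proof.
move=> A1 hk zB; have [A0 _ _ _] := subA.
apply: maximal_absorbs; first exact: Tnd_single.
  move=> k' l hk' hl.
  have [_ ->] := symbol_single (1 : mat) (0 : mat) hk hl.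
  have [_ ->] := symbol_single (1 : mat) (0 : mat) hk hk'.
  by rewrite !if_same mulr0 mul0r.
by move=> Y hY k' l hk' hl; have [-> ->] := zB Y hY l hl; rewrite !mulr0.
Qed.

Lemma Ek_max_neq0 (k : nat) : A 1 -> (1 : mat) != 0 -> (k < n)%N ->
  exists2 X, B X & Ek k X != 0.
Proof.
move=> A1 one0 hk; have [A0 _ _ _] := subA.
case: (posnP k) => [k0|kpos].
  subst k; exists (toeplitz_mx n (single_sym 0 1 0)); last by rewrite Ek_single single_neq0 ?one0.
  apply: diag_in_max; exists (single_sym 0 1 0); split.
    by move=> m _; rewrite /single_sym; case: ifP => _ //; case: ifP.
  by split=> // m _ m0; rewrite /single_sym (negbTE m0) if_same.
have hk2 : (0 < k < n)%N by rewrite kpos.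
case: (classic (exists2 Y, B Y & exists2 l : nat, (0 < l < n)%N &
          (symbol Y l%:Z != 0) || (symbol Y (l%:Z - n%:Z) != 0))) => [[Y hY [l hl hnz]]|none].
  exact: offdiag_spread hY hl hnz hk2.
exists (toeplitz_mx n (single_sym k 1 0)); last by rewrite Ek_single single_neq0 ?one0.
apply: offdiag_adjoin => // Y hY l hl.
by split; apply/eqP; apply: contraT => hnz; case: none; exists Y => //; exists l; rewrite ?hnz ?orbT.
Qed.

End MaximalSubalgebra.

End FixedSize.

End BlockToeplitz.

Unset Implicit Arguments.

Theorem theorem4p5 (C : numClosedFieldType) (d n : nat)
    (A : 'M[C]_d -> Prop) (B : 'M['M[C]_d]_n -> Prop) :
  (0 < d)%N -> (2 <= n)%N ->
  is_max_comm_subalg A -> is_max_subalg_in n A B ->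
  [/\ (* (i) *)
      (forall X, Dnd A X -> B X),
      (* (ii) *)
      (forall X, B X -> forall k : nat, (k < n)%N -> B (Ek k X)),
      (* (iii) *)
      (forall X, B X <->
         bspan (fun Y => exists2 k : nat, (k < n)%N &
                           exists2 Z, B Z & Y = Ek k Z) X),
      (* (iv) *)
      (forall s : {perm 'I_n}, (forall i : 'I_n, val i = 0%N -> val (s i) = 0%N) ->
         forall (X : 'M['M[C]_d]_n) (f : int -> 'M[C]_d),
           B X -> X = toeplitz_mx n f -> B (toeplitz_mx n (sigma_sym s f))) &
      (* (v) *)
      (forall k : nat, (k < n)%N -> exists2 X, B X & Ek k X != 0)].
Proof.
move=> d0 _ maxA maxB; have [subA commA _] := maxA.
split.
- exact: (diag_in_max subA commA maxB).
- by move=> X hX k hk; exact: (Ek_in_max subA commA maxB hX hk).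
- by move=> X; exact: (max_span_Ek subA commA maxB).
- by move=> s hs X f; exact: (perm_in_max subA commA maxB hs).
- move=> k hk; apply: (Ek_max_neq0 subA commA maxB _ _ hk).
  + exact: (max_comm_subalg1 maxA).
  + exact: (one_neq0 C d0).
Qed.
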